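(* There exist sets $\mathcal X,\mathcal Y$, a metric $\ell$ on $\mathcal Y$, and a class $\mathcal H\subseteq\mathcal Y^{\mathcal X}$ such that $\operatorname{diam}(\mathcal H)<\infty$, $\Phi(\mathcal H)=\infty$, and $\mathbb{D}_{\mathrm{onl}}(\mathcal H)<\infty$.
   Context: For $\ell:\mathcal Y\times\mathcal Y\to\mathbb R_{\ge0}$ and $\mathcal H\subseteq\mathcal Y^{\mathcal X}$: $d_\ell(f,g)=\sup_x\ell(f(x),g(x))$, $\operatorname{diam}(\mathcal H)=\sup_{f,g\in\mathcal H}d_\ell(f,g)$, $N(\mathcal H,\varepsilon)$ is the minimal size of $S\subseteq\mathcal H$ such that every $h\in\mathcal H$ is within $d_\ell$-distance $\le\varepsilon$ of some $s\in S$ ($+\infty$ if none finite), and $\Phi(\mathcal H)=\int_0^{\operatorname{diam}(\mathcal H)}\log_2N(\mathcal H,\varepsilon)d\varepsilon$. Scaled Littlestone tree of depth $D\le\infty$: internal nodes $u\in\{0,1\}^{<D}$ labeled $x_u\in\mathcal X$, edges labeled $s_{u,0},s_{u,1}\in\mathcal Y$, gap $\gamma_u=\ell(s_{u,0},s_{u,1})$; realizable by $\mathcal H$ if for every branch $b$ and finite $n\le D$ some $h\in\mathcal{H}$ has $h(x_{b_{\le t}})=s_{b_{\le t},b_{t+1}}$ for $t<n$ ($b_{\le t}$ the length-$t$ prefix). $\mathbb{D}_{\mathrm{onl}}(\mathcal{H})=\sup_{\mathcal T}\inf_b\sum_t\gamma_{b_{\le t}}$ over realizable trees $\mathcal T$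 and branches $b$. *)

From HB Require Import structures.
From mathcomp Require Import all_boot all_order all_algebra.
From mathcomp Require Import all_classical all_reals all_analysis.
From mathcomp Require Import Rstruct Rstruct_topology.
Set Implicit Arguments. Unset Strict Implicit. Unset Printing Implicit Defensive.
Import Order.TTheory GRing.Theory Num.Theory.
Local Open Scope classical_set_scope.
Local Open Scope ring_scope.
Local Open Scope ereal_scope.

Section Defs.
Variable R : realType.

Definition is_metric (Y : Type) (ell : Y -> Y -> R) : Prop :=
  [/\ forall a b, (0 <= ell a b)%R,
      forall a b, ell a b = 0%R <-> a = b,
      forall a b, ell a b = ell b a
    & forall a b c, (ell a c <= ell a b + ell b c)%R].

(* d_ell(f,g) = sup_x ell(f x, g x)  (value 0 when X is empty) *)
Definition dl (X Y : Type) (ell : Y -> Y -> R) (f g : X -> Y) : \bar R :=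
  ereal_sup (0 |` [set (ell (f x) (g x))%:E | x in [set: X]]).

(* diam(H) = sup_{f,g in H} d_ell(f,g)  (value 0 when H is empty) *)
Definition diam (X Y : Type) (ell : Y -> Y -> R) (H : set (X -> Y)) : \bar R :=
  ereal_sup (0 |` [set dl ell fg.1 fg.2 | fg in [set fg | H fg.1 /\ H fg.2]]).

(* N(H, eps): minimal size of a finite S (given as a list, whose minimal
   length equals the minimal cardinality) of elements of H such that every
   h in H is within distance <= eps of some s in S; +oo if none exists. *)
Definition covering_number (X Y : Type) (ell : Y -> Y -> R)
    (H : set (X -> Y)) (eps : R) : \bar R :=
  ereal_inf [set ((size S)%:R)%:E | S in
    [set S : seq (X -> Y) |
       (forall s, List.In s S -> H s) /\
       (forall h, H h -> exists2 s, List.In s S & dl ell h s <= eps%:E)]].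

Definition elog2 (x : \bar R) : \bar R :=
  match x with
  | r%:E => (ln r / ln 2)%:E
  | +oo => +oo
  | -oo => -oo
  end.

Definition Phi (X Y : Type) (ell : Y -> Y -> R) (H : set (X -> Y)) : \bar R :=
  \int[@lebesgue_measure R]_(e in [set e : R | 0 <= e%:E <= diam ell H])
     elog2 (covering_number ell H e).

(* Depth D : \bar nat encoded as option nat
   (None = infinite depth).  Nodes are finite bit strings u (seq bool);
   only nodes with size u < D are internal nodes.  tx u = x_u,
   ts u b = s_{u,b}. *)
Definition lt_depth (D : option nat) (n : nat) : Prop :=
  match D with Some d => (n < d)%N | None => True end.
Definition le_depth (D : option nat) (n : nat) : Prop :=
  match D with Some d => (n <= d)%N | None => True end.

Definition prefix (b : nat -> bool) (t : nat) : seq bool := mkseq b t.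

(* A branch is an infinite bit sequence; for finite depth D only its first
   D bits matter. *)
Definition realizable (X Y : Type) (H : set (X -> Y)) (D : option nat)
    (tx : seq bool -> X) (ts : seq bool -> bool -> Y) : Prop :=
  forall (b : nat -> bool) (n : nat), le_depth D n ->
    exists2 h, H h &
      forall t, (t < n)%N -> h (tx (prefix b t)) = ts (prefix b t) (b t).

Definition gap (Y : Type) (ell : Y -> Y -> R) (ts : seq bool -> bool -> Y)
    (u : seq bool) : R := ell (ts u false) (ts u true).

Definition branch_sum (Y : Type) (ell : Y -> Y -> R) (D : option nat)
    (ts : seq bool -> bool -> Y) (b : nat -> bool) : \bar R :=
  \esum_(t in [set t : nat | lt_depth D t]) (gap ell ts (prefix b t))%:E.

Definition Donl (X Y : Type) (ell : Y -> Y -> R) (H : set (X -> Y)) : \bar R :=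
  ereal_sup [set ereal_inf [set branch_sum ell T.1.1 T.2 b | b in [set: nat -> bool]]
            | T in [set T : (option nat * (seq bool -> X)) * (seq bool -> bool -> Y) |
                     realizable H T.1.1 T.1.2 T.2]].
End Defs.

(* The witness is a single query point and the discrete metric on nat.  Every
   hypothesis takes at most one value per point, so any two differ by at most 1
   and diam H = 1; but the constant functions are pairwise at distance 1, so no
   finite family covers H at a scale below 1, N(H, e) = +oo on [0, 1[ and
   Phi(H) = +oo.  On the other hand, a Littlestone tree over a one-point domain
   queries the same point at every node: a single hypothesis realizing a branch
   fixes the label of that point at the root, so below the root both edges of
   every node carry the same label, all gaps there vanish, and every branch
   sums to at most the root gap, i.e. Donl(H) <= 1. *)
From Pilot Require Import Defs.
From mathcomp Require Import all_boot all_order all_algebra.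
From mathcomp Require Import all_classical all_reals all_analysis.
From mathcomp Require Import Rstruct.
(* Without this re-import, [\bar R] is not found to be a measurable type for
   an abstract [R : realType]. *)
From mathcomp Require Import measurable_realfun.
Set Implicit Arguments. Unset Strict Implicit. Unset Printing Implicit Defensive.
Import Order.TTheory GRing.Theory Num.Theory.
Local Open Scope classical_set_scope.
Local Open Scope ereal_scope.

Section DiscreteMetric.
Variables (R : realType) (Y : eqType).

Definition discrete_dist (a b : Y) : R := (a != b)%:R.

Lemma discrete_dist_ge0 a b : (0 <= discrete_dist a b)%R.
Proof. exact: ler0n. Qed.

Lemma discrete_dist_le1 a b : (discrete_dist a b <= 1)%R.
Proof. by rewrite /discrete_dist; case: (a != b). Qed.

Lemma discrete_distxx a : discrete_dist a a = 0%R.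
Proof. by rewrite /discrete_dist eqxx. Qed.

Lemma discrete_dist_metric : is_metric discrete_dist.
Proof.
split.
- exact: discrete_dist_ge0.
- move=> a b; rewrite /discrete_dist; split; last by move=> ->; rewrite eqxx.
  by case: eqVneq => // _ /eqP; rewrite oner_eq0.
- by move=> a b; rewrite /discrete_dist eq_sym.
- move=> a b c; rewrite /discrete_dist.
  have [->|ab] := eqVneq a b; first by rewrite add0r.
  by rewrite -natrD ler_nat (leq_trans (leq_b1 _)) // leq_addr.
Qed.

End DiscreteMetric.

Section SupDistance.
Variables (R : realType) (X Y : Type) (ell : Y -> Y -> R).

Lemma dl_ge (f g : X -> Y) x : (ell (f x) (g x))%:E <= dl ell f g.
Proof. by apply: ereal_sup_ubound; right; exists x. Qed.

Lemma dl_le (c : R) (f g : X -> Y) :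
  (0 <= c)%R -> (forall a b, ell a b <= c)%R -> dl ell f g <= c%:E.
Proof.
move=> c0 ell_le; apply: ge_ereal_sup => _ [->|[x _ <-]]; by rewrite lee_fin.
Qed.

Lemma diam_ge (H : set (X -> Y)) f g x :
  H f -> H g -> (ell (f x) (g x))%:E <= diam ell H.
Proof.
move=> Hf Hg; apply: le_trans (dl_ge f g x) _.
by apply: ereal_sup_ubound; right; exists (f, g).
Qed.

Lemma diam_le (c : R) (H : set (X -> Y)) :
  (0 <= c)%R -> (forall a b, ell a b <= c)%R -> diam ell H <= c%:E.
Proof.
move=> c0 ell_le; apply: ge_ereal_sup => _ [->|[fg _ <-]]; first by rewrite lee_fin.
exact: dl_le.
Qed.

End SupDistance.

Lemma diam_discrete_all (R : realType) (X : Type) (Y : eqType) (x : X) (a b : Y) :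
  a != b -> diam (discrete_dist R (Y:=Y)) [set: X -> Y] = 1%:E.
Proof.
move=> ab; apply/eqP; rewrite eq_le diam_le ?ler01 //=; last exact: discrete_dist_le1.
by rewrite (le_trans _ (diam_ge _ (f:=fun=> a) (g:=fun=> b) x I I)) // /discrete_dist ab.
Qed.

Lemma covering_number_ge1 (R : realType) (X Y : Type) (ell : Y -> Y -> R)
    (H : set (X -> Y)) (h : X -> Y) (e : R) :
  H h -> 1 <= covering_number ell H e.
Proof.
move=> Hh; apply: le_ereal_inf_tmp => _ [S [_ /(_ h Hh) [s sS _]] <-].
by rewrite lee_fin ler1n; case: S sS.
Qed.

Lemma In_le_sumn (T : Type) (F : T -> nat) (S : seq T) s :
  List.In s S -> (F s <= sumn (map F S))%N.
Proof.
elim: S => //= s' S IH [->|/IH]; first exact: leq_addr.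
by move/leq_trans; apply; apply: leq_addl.
Qed.

Lemma covering_number_discrete_nat (R : realType) (X : Type) (x : X) (e : R) :
  (e < 1)%R -> covering_number (discrete_dist R (Y:=nat)) [set: X -> nat] e = +oo.
Proof.
move=> e_lt1; apply/ereal_inf_pinfty => _ [S [_ covS] <-]; exfalso.
pose m := sumn (map (fun s => s x) S).
have [s sS] := covS (fun=> m.+1) I.
have s_le_m : (s x <= m)%N := In_le_sumn (fun s => s x) sS.
move=> /(le_trans (dl_ge _ _ _ x)); rewrite /discrete_dist gtn_eqF ?ltnS //=.
by rewrite lee_fin => /(lt_le_trans e_lt1); rewrite ltxx.
Qed.

Lemma elog2_ge0 (R : realType) (x : \bar R) : 1 <= x -> 0 <= elog2 x.
Proof.
case: x => [r||] //=; rewrite !lee_fin => r_ge1.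
by apply: divr_ge0; apply: ln_ge0; rewrite ?ler1n.
Qed.

Lemma Phi_pinfty (R : realType) (X Y : Type) (ell : Y -> Y -> R)
    (H : set (X -> Y)) (h : X -> Y) (d : R) :
  H h -> (0 < d)%R -> diam ell H = d%:E ->
  (forall e, (0 <= e < d)%R -> covering_number ell H e = +oo) ->
  Phi ell H = +oo.
Proof.
move=> Hh d_gt0 diamH covH; rewrite /Phi diamH.
set f := fun e : R => elog2 (covering_number ell H e).
set D := [set e : R | 0 <= e%:E <= d%:E].
set A := `[0%R, d[%classic : set R.
have DE : D = A `|` [set d].
  apply/seteqP; split => x /=; rewrite /A /D /= in_itv /= ?lee_fin.
    by case/andP=> ->; rewrite le_eqVlt => /orP[/eqP->|->]; [right|left].
  by case=> [/andP[-> /ltW ->]|->] //; rewrite lexx ltW.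
have fA : {in A, f =1 cst +oo} by move=> x; rewrite inE => /covH; rewrite /f => ->.
have mA : measurable A by exact: measurable_itv.
have mD : measurable D by rewrite DE; apply: measurableU.
have mf : measurable_fun D f.
  rewrite DE; apply/measurable_funU => //; split; last exact: measurable_fun_set1.
  by apply: (eq_measurable_fun (cst +oo)) => [x /fA ->|]; last exact: measurable_cst.
have f_ge0 x : D x -> 0 <= f x by move=> _; apply: elog2_ge0; exact: covering_number_ge1 Hh.
apply/eqP; rewrite eq_le leey /=.
have AD : A `<=` D by rewrite DE; exact: subsetUl.
apply: (le_trans _ (ge0_subset_integral lebesgue_measure mA mD mf f_ge0 AD)).
rewrite (eq_integral (mu := lebesgue_measure) _ _ fA) integral_cst //.
have /= -> := lebesgue_measure_itv `[0%R, d[%R.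
by rewrite lte_fin d_gt0 oppr0 adde0 mulyr gtr0_sg ?mul1e.
Qed.

Section OnePointTrees.
Variables (R : realType) (Y : Type) (ell : Y -> Y -> R).
Hypotheses (ell_ge0 : forall a b, (0 <= ell a b)%R) (ellxx : forall a, ell a a = 0%R).

Lemma prefix_set_nth (b : nat -> bool) t c :
  Defs.prefix (fun i => if i == t then c else b i) t = Defs.prefix b t.
Proof.
apply/eq_in_map => i; rewrite mem_iota add0n => /andP[_ it].
by rewrite (ltn_eqF it).
Qed.

Lemma realizable_const_gap0 (X : Type) (H : set (X -> Y)) D tx ts (x : X) :
  realizable H D tx ts -> (forall u, tx u = x) ->
  forall b t, (0 < t)%N -> lt_depth D t -> gap ell ts (Defs.prefix b t) = 0%R.
Proof.
move=> realT tx_x b t t_gt0 Dt.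
have Dt1 : le_depth D t.+1 by case: D realT Dt.
have label_at c : ts (Defs.prefix b t) c = ts [::] (b 0%N).
  have [h _ hb] := realT (fun i => if i == t then c else b i) t.+1 Dt1.
  move: (hb 0%N isT) (hb t (ltnSn t)); rewrite !tx_x eqxx prefix_set_nth.
  by rewrite eq_sym (gtn_eqF t_gt0) => <- <-.
by rewrite /gap !label_at ellxx.
Qed.

Lemma branch_sum_le_root D ts (b : nat -> bool) :
  (forall t, (0 < t)%N -> lt_depth D t -> gap ell ts (Defs.prefix b t) = 0%R) ->
  branch_sum ell D ts b <= (gap ell ts [::])%:E.
Proof.
move=> gap0; rewrite /branch_sum (esumID [set 0%N]); last first.
  by move=> t _; rewrite lee_fin; exact: ell_ge0.
rewrite [X in _ + X]esum1 ?adde0 => [|t [Dt t0]]; last by rewrite gap0 // lt0n; apply/eqP.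
have [D0|nD0] := pselect (lt_depth D 0).
  have -> : [set t | lt_depth D t] `&` [set 0%N] = [set 0%N].
    by apply/seteqP; split => [t [] //|t /= ->].
  by rewrite esum_set1 lee_fin //; exact: ell_ge0.
have -> : [set t | lt_depth D t] `&` [set 0%N] = set0.
  by apply/seteqP; split => [t [Dt /= t0]|//]; subst.
by rewrite esum_set0 lee_fin; exact: ell_ge0.
Qed.

Lemma Donl_unit_le (H : set (unit -> Y)) (c : R) :
  (forall a b, ell a b <= c)%R -> Donl ell H <= c%:E.
Proof.
move=> ell_le; apply: ge_ereal_sup => _ [[[D tx] ts] /= realT <-].
apply: le_trans (ereal_inf_lbound _) _; first by exists xpred0.
apply: le_trans (branch_sum_le_root _) _; last by rewrite lee_fin; exact: ell_le.
have tx_tt u : tx u = tt by case: (tx u).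
exact: (realizable_const_gap0 realT tx_tt).
Qed.

End OnePointTrees.

Theorem proposition1p9 :
  exists (X Y : Type) (ell : Y -> Y -> Rdefinitions.R) (H : set (X -> Y)),
    [/\ is_metric ell, diam ell H < +oo, Phi ell H = +oo & Donl ell H < +oo].
Proof.
pose ell := discrete_dist Rdefinitions.R (Y:=nat).
have diamH : diam ell [set: unit -> nat] = 1%:E.
  exact: (@diam_discrete_all _ _ _ tt 0%N 1%N).
exists unit, nat, ell, [set: unit -> nat]; split.
- exact: discrete_dist_metric.
- by rewrite diamH ltry.
- apply: (Phi_pinfty (h := fun=> 0%N) I ltr01 diamH) => e /andP[_].
  exact: covering_number_discrete_nat tt e.
- apply: le_lt_trans (ltry 1%R).
  apply: Donl_unit_le; [exact: discrete_dist_ge0|exact: discrete_distxx|].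
  exact: discrete_dist_le1.
Qed.
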